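(* Break the segment $[0,1]$ at two independent uniformly random points into three pieces, and let $A$ denote the area of the triangle with these three side lengths when it exists. Let $A_0 \in (0, \sqrt{3}/36)$. Then, given that a triangle can be formed, the probability that its area exceeds $A_0$ is \[ \mathbb P(A > A_0) = 4\int_{\mu_1}^{\mu_2} \sqrt{k^2(1-k^2)^2 - (8A_0)^2} \; dk, \] where $0 < \mu_1 < \mu_2 < 1$ are the two roots in $(0,1)$ of the polynomial $k(1-k^2) - 8A_0$.
   Context: Three lengths form a triangle iff each is less than the sum of the other two (equivalently, each is less than $1/2$ when they sum to $1$). *)

From HB Require Import structures.
From mathcomp Require Import all_boot all_order all_algebra.
From mathcomp Require Import all_classical all_reals all_analysis.
Set Implicit Arguments. Unset Strict Implicit. Unset Printing Implicit Defensive.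
Import Order.TTheory GRing.Theory Num.Theory.
Local Open Scope classical_set_scope.
Local Open Scope ring_scope.

Section Defs.
Variable R : realType.

Definition piece1 (x y : R) : R := Num.min x y.
Definition piece2 (x y : R) : R := `|x - y|.
Definition piece3 (x y : R) : R := 1 - Num.max x y.

Definition is_triangle (a b c : R) : Prop := a < b + c /\ b < a + c /\ c < a + b.

Definition heron_area (a b c : R) : R :=
  let s := (a + b + c) / 2 in Num.sqrt (s * (s - a) * (s - b) * (s - c)).

(* Sample space: the unit square, with two independent uniform points,
   i.e. the (product) Lebesgue measure restricted to [0,1]^2 (total mass 1). *)
Definition unit_square : set (R * R) := `[0, 1] `*` `[0, 1].

Definition uniform2 := ((@lebesgue_measure R) \x (@lebesgue_measure R))%E.

Definition triangle_event : set (R * R) :=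
  [set p | is_triangle (piece1 p.1 p.2) (piece2 p.1 p.2) (piece3 p.1 p.2)].

Definition area_gt_event (A0 : R) : set (R * R) :=
  [set p | A0 < heron_area (piece1 p.1 p.2) (piece2 p.1 p.2) (piece3 p.1 p.2)].

Definition cond_prob (E B : set (R * R)) : R :=
  fine (uniform2 (unit_square `&` B `&` E)) / fine (uniform2 (unit_square `&` B)).

End Defs.

(* The pieces sum to 1, so Heron's formula reads
   [16 A^2 = (1 - 2a) (1 - 2b) (1 - 2c)]; for [x < 1/2] the [y] giving a
   triangle of area [> A] then form an interval of length
   [G x = sqrt (x^2 - 16 A^2 / (1 - 2x))], and the symmetry
   [(x, y) -> (1 - x, 1 - y)] covers [x > 1/2], so the event has mass
   [2 \int_0^(1/2) G]. The substitution [x = (1 - k^2) / 2] turns [G x dx] into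
   [sqrt (k^2 (1 - k^2)^2 - (8 A)^2) dk / 2] and the support of [G] into
   [[mu1, mu2]]. The triangle event itself is the case [A = 0], of mass [1/4]. *)

From mathcomp Require Import all_boot all_order all_algebra.
From mathcomp Require Import all_classical all_reals all_analysis.
From mathcomp Require Import ring lra measurable_realfun.
Import Order.TTheory GRing.Theory Num.Theory.
Import numFieldNormedType.Exports.
Local Open Scope classical_set_scope.
Local Open Scope ring_scope.

Section TriangleArea.
Context {R : realType}.
Local Notation mu := (@lebesgue_measure R).

Lemma heron_area_perimeter1 (a b c : R) : a + b + c = 1 ->
  heron_area a b c = Num.sqrt ((1 - 2 * a) * (1 - 2 * b) * (1 - 2 * c) / 16).
Proof. by move=> abc1; rewrite /heron_area /= abc1; congr Num.sqrt; field. Qed.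

Lemma heron_areaC (a b c : R) : heron_area c b a = heron_area a b c.
Proof. by rewrite /heron_area /=; congr Num.sqrt; ring. Qed.

Lemma is_triangleC (a b c : R) : is_triangle c b a <-> is_triangle a b c.
Proof. by rewrite /is_triangle; split=> -[? [? ?]]; do !split; lra. Qed.

Lemma is_triangle_sum1 {a b c : R} : a + b + c = 1 ->
  is_triangle a b c <-> [/\ a < 1/2, b < 1/2 & c < 1/2].
Proof.
move=> abc1; rewrite /is_triangle.
by split=> [[? [? ?]]|[? ? ?]]; do !split; lra.
Qed.

Lemma pieces_le {x y : R} : x <= y ->
  [/\ piece1 x y = x, piece2 x y = y - x & piece3 x y = 1 - y].
Proof.
move=> xy; rewrite /piece1 /piece2 /piece3 min_l // max_r //.
by rewrite distrC ger0_norm // subr_ge0.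
Qed.

Lemma pieces_ge {x y : R} : y <= x ->
  [/\ piece1 x y = y, piece2 x y = x - y & piece3 x y = 1 - x].
Proof.
move=> yx; rewrite /piece1 /piece2 /piece3 min_r // max_l //.
by rewrite ger0_norm // subr_ge0.
Qed.

Lemma pieces_sum (x y : R) : piece1 x y + piece2 x y + piece3 x y = 1.
Proof.
have [xy|yx] := leP x y; first by have [-> -> ->] := pieces_le xy; ring.
by have [-> -> ->] := pieces_ge (ltW yx); ring.
Qed.

Lemma pieces_onem (x y : R) :
  [/\ piece1 (1 - x) (1 - y) = piece3 x y, piece2 (1 - x) (1 - y) = piece2 x y
    & piece3 (1 - x) (1 - y) = piece1 x y].
Proof.
have [xy|yx] := leP x y.
  have [-> -> ->] := pieces_le xy.
  have yx' : 1 - y <= 1 - x by lra.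
  by have [-> -> ->] := pieces_ge yx'; split=> //; ring.
have [-> -> ->] := pieces_ge (ltW yx).
have xy' : 1 - x <= 1 - y by lra.
by have [-> -> ->] := pieces_le xy'; split=> //; ring.
Qed.

Lemma ltr_norm_sqrt (t v : R) : (`|t| < Num.sqrt v) = (t ^+ 2 < v).
Proof.
have [v_le0|v_gt0] := leP v 0; last by rewrite -sqrtr_sqr ltr_sqrt.
rewrite ler0_sqrtr // ltNge normr_ge0; apply/esym/negbTE.
by rewrite -leNgt (le_trans v_le0) ?sqr_ge0.
Qed.

(* For a break point [x < 1/2], Heron's formula turns the set of [y] giving a
   triangle of area [> A] into the interval [|1 + x - 2 y| < section_len A x],
   of length [section_len A x]. *)
Definition section_len (A x : R) : R :=
  Num.sqrt (x ^+ 2 - (4 * A) ^+ 2 / (1 - 2 * x)).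

Lemma section_len_ge0 (A x : R) : 0 <= section_len A x.
Proof. exact: sqrtr_ge0. Qed.

Lemma ltr_norm_section_len (A x t : R) : x < 1/2 ->
  (`|t| < section_len A x) =
  ((1 - 2 * x) * t ^+ 2 < (1 - 2 * x) * x ^+ 2 - (4 * A) ^+ 2).
Proof.
move=> x_lt; rewrite ltr_norm_sqrt.
have u_gt0 : 0 < 1 - 2 * x by lra.
have -> : x ^+ 2 - (4 * A) ^+ 2 / (1 - 2 * x) =
          ((1 - 2 * x) * x ^+ 2 - (4 * A) ^+ 2) / (1 - 2 * x).
  by field; lra.
by rewrite ltr_pdivlMr // mulrC.
Qed.

Lemma triangle_area_gt_sorted (A x y : R) :
  0 <= A -> 0 <= x -> x < 1/2 -> x <= y ->
  (is_triangle x (y - x) (1 - y) /\ A < heron_area x (y - x) (1 - y)) <->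
  `|1 + x - 2 * y| < section_len A x.
Proof.
move=> A_ge0 x_ge0 x_lt xy.
rewrite heron_area_perimeter1; last by ring.
rewrite -[A]ger0_norm // ltr_norm_sqrt ger0_norm // ltr_norm_section_len //.
rewrite /is_triangle.
split=> [[[? [? ?]] ?]|lt_sec]; first by nra.
have u_gt0 : 0 < 1 - 2 * x by lra.
have : (1 + x - 2 * y) ^+ 2 < x ^+ 2 by nra.
by do !split; nra.
Qed.

Lemma section_len_le_norm (A : R) {x y : R} : 0 <= x -> x < 1/2 -> y < x ->
  section_len A x <= `|1 + x - 2 * y|.
Proof.
move=> x_ge0 x_lt yx; rewrite leNgt ltr_norm_section_len //.
apply/negP => lt_sec.
have u_gt0 : 0 < 1 - 2 * x by lra.
have : (1 + x - 2 * y) ^+ 2 < x ^+ 2 by nra.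
nra.
Qed.

Definition triangle_area_gt (A : R) : set (R * R) :=
  @unit_square R `&` @triangle_event R `&` area_gt_event A.

Lemma in_triangle_area_gt (A x y : R) : triangle_area_gt A (x, y) <->
  [/\ 0 <= x <= 1, 0 <= y <= 1,
      is_triangle (piece1 x y) (piece2 x y) (piece3 x y) &
      A < heron_area (piece1 x y) (piece2 x y) (piece3 x y)].
Proof.
rewrite /triangle_area_gt /unit_square /triangle_event /area_gt_event /=.
by rewrite !in_itv; split=> [[[[]]]|[]].
Qed.

Lemma triangle_area_gt_lt_half (A x y : R) : 0 <= A -> 0 <= x -> x < 1/2 ->
  triangle_area_gt A (x, y) <-> `|1 + x - 2 * y| < section_len A x.
Proof.
move=> A_ge0 x_ge0 x_lt; rewrite in_triangle_area_gt.
have [xy|yx] := leP x y.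
  have [-> -> ->] := pieces_le xy; rewrite -triangle_area_gt_sorted //.
  split=> [[_ _ *]|[[? [? ?]] ?]]; first by [].
  by split=> //; apply/andP; split; lra.
have [-> -> ->] := pieces_ge (ltW yx).
have := section_len_le_norm A x_ge0 x_lt yx.
by split=> [[_ _ [_ [_ ?]] _]|]; lra.
Qed.

Lemma triangle_area_gt_onem (A x y : R) :
  triangle_area_gt A (1 - x, 1 - y) <-> triangle_area_gt A (x, y).
Proof.
rewrite !in_triangle_area_gt; have [-> -> ->] := pieces_onem x y.
rewrite heron_areaC.
by split=> -[/andP[? ?] /andP[? ?] /is_triangleC ? ?]; split=> //;
  apply/andP; split; lra.
Qed.

Lemma lebesgue_measure_norm_lt (c g : R) : 0 <= g ->
  mu [set y | `|c - 2 * y| < g] = g%:E.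
Proof.
move=> g_ge0.
have -> : [set y | `|c - 2 * y| < g] = `](c - g) / 2, (c + g) / 2[%classic.
  by apply/seteqP; split=> y /=; rewrite in_itv /= ltr_norml => /andP[? ?];
    apply/andP; split; lra.
rewrite lebesgue_measure_itv /= lte_fin.
by case: ifPn => [_|?]; [rewrite -EFinB; congr EFin; field | congr EFin; lra].
Qed.

Definition section_meas (A x : R) : R :=
  if (0 <= x) && (x < 1/2) then section_len A x
  else if (1/2 < x) && (x <= 1) then section_len A (1 - x) else 0.

Lemma section_meas_ge0 (A x : R) : 0 <= section_meas A x.
Proof.
by rewrite /section_meas; do 2?case: ifP => _; rewrite ?section_len_ge0.
Qed.

Lemma section_meas_lt_half (A x : R) : 0 <= x -> x < 1/2 ->
  section_meas A x = section_len A x.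
Proof. by move=> x_ge0 x_lt; rewrite /section_meas x_ge0 x_lt. Qed.

Lemma section_meas_gt_half (A x : R) : 1/2 < x -> x <= 1 ->
  section_meas A x = section_len A (1 - x).
Proof.
move=> x_gt x_le1; rewrite /section_meas x_gt x_le1.
by case: ifP => // /andP[_ ?]; lra.
Qed.

Lemma xsection_triangle_area_gt (A x : R) : 0 <= A ->
  mu (xsection (triangle_area_gt A) x) = (section_meas A x)%:E.
Proof.
move=> A_ge0; rewrite /section_meas.
case: ifPn => [/andP[x_ge0 x_lt]|x_lo].
  rewrite (_ : xsection _ x = [set y | `|1 + x - 2 * y| < section_len A x]).
    exact/lebesgue_measure_norm_lt/section_len_ge0.
  apply/funext => y; apply/propext; rewrite /xsection /= in_setE.
  exact: triangle_area_gt_lt_half.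
case: ifPn => [/andP[x_gt x_le1]|x_hi].
  rewrite (_ : xsection _ x = [set y | `|x - 2 * y| < section_len A (1 - x)]).
    exact/lebesgue_measure_norm_lt/section_len_ge0.
  apply/funext => y; apply/propext; rewrite /xsection /= in_setE.
  rewrite -triangle_area_gt_onem triangle_area_gt_lt_half; try lra.
  by rewrite (_ : 1 + (1 - x) - 2 * (1 - y) = - (x - 2 * y)) ?normrN //; ring.
rewrite (_ : xsection _ x = set0) ?measure0 //.
apply/funext => y; apply/propext; rewrite /xsection /= in_setE; split=> //.
move=> /in_triangle_area_gt[/andP[x_ge0 x_le1] _ + _].
move: x_lo x_hi; rewrite x_ge0 x_le1 andbT /= -!leNgt => x_ge x_le.
move/(is_triangle_sum1 (pieces_sum x y)) => [? _ ?].
have [xy|yx] := leP x y.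
  by have [p1 _ _] := pieces_le xy; lra.
by have [_ _ p3] := pieces_ge (ltW yx); lra.
Qed.

(* [uniform2] integrates the measures of the sections over any set, so no
   measurability of the event is required. *)
Lemma uniform2_triangle_area_gt (A : R) : 0 <= A ->
  uniform2 (triangle_area_gt A) = (\int[mu]_x (section_meas A x)%:E)%E.
Proof.
move=> A_ge0; transitivity (\int[mu]_x mu (xsection (triangle_area_gt A) x))%E.
  by [].
by apply: eq_integral => x _; rewrite xsection_triangle_area_gt.
Qed.

Definition lower_break (k : R) : R := (1 - k ^+ 2) / 2.
Definition upper_break (k : R) : R := (1 + k ^+ 2) / 2.

Lemma upper_breakE (k : R) : upper_break k = 1 - lower_break k.
Proof. by rewrite /upper_break /lower_break; field. Qed.

Lemma derivable_continuous {f : R -> R} :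
  (forall x, derivable f x 1) -> continuous f.
Proof.
by move=> df x; apply: differentiable_continuous; apply/derivable1_diffP.
Qed.

Lemma derivable_lower_break (k : R) : derivable lower_break k 1.
Proof.
by apply: derivableM => //; apply: derivableB => //; exact: exprn_derivable.
Qed.

Lemma derivable_upper_break (k : R) : derivable upper_break k 1.
Proof.
by apply: derivableM => //; apply: derivableD => //; exact: exprn_derivable.
Qed.

Lemma derive1_lower_break : lower_break^`()%classic = -%R.
Proof.
apply/funext => k; rewrite derive1E /lower_break deriveMr //= deriveB //=.
rewrite derive_cst exp_derive expr1 /GRing.scale /= mulr1 sub0r mulrN mulrA.
by rewrite mulVf ?mul1r // pnatr_eq0.
Qed.

Lemma derive1_upper_break : upper_break^`()%classic = id.
Proof.
apply/funext => k; rewrite derive1E /upper_break deriveMr //= deriveD //=.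
rewrite derive_cst exp_derive expr1 /GRing.scale /= mulr1 add0r mulrA.
by rewrite mulVf ?mul1r // pnatr_eq0.
Qed.

Lemma integral_lower_break (G : R -> R) (a b : R) : 0 <= a -> a <= b ->
  {within `[lower_break b, lower_break a], continuous G} ->
  (\int[mu]_(x in `[lower_break b, lower_break a]) (G x)%:E =
   \int[mu]_(k in `[a, b]) (G (lower_break k) * k)%:E)%E.
Proof.
move=> a_ge0 ab cG.
rewrite (integration_by_substitution_decreasing (F := lower_break)) //.
- by apply: eq_integral => k _; rewrite derive1_lower_break /= opprK.
- move=> x y; rewrite !in_itv /= => /andP[? _] /andP[? _] ?.
  by rewrite /lower_break; nra.
- by rewrite derive1_lower_break => x _; exact: oppr_continuous.
- rewrite derive1_lower_break; apply/cvg_ex; exists (- a).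
  exact/cvg_at_right_filter/oppr_continuous.
- rewrite derive1_lower_break; apply/cvg_ex; exists (- b).
  exact/cvg_at_left_filter/oppr_continuous.
- have cF := derivable_continuous derivable_lower_break.
  split; first by move=> *; exact: derivable_lower_break.
  + exact: cvg_at_right_filter (cF a).
  + exact: cvg_at_left_filter (cF b).
Qed.

Lemma integral_upper_break (G : R -> R) (a b : R) : 0 <= a -> a <= b ->
  {within `[upper_break a, upper_break b], continuous G} ->
  (\int[mu]_(x in `[upper_break a, upper_break b]) (G x)%:E =
   \int[mu]_(k in `[a, b]) (G (upper_break k) * k)%:E)%E.
Proof.
move=> a_ge0 ab cG.
rewrite (integration_by_substitution_increasing (F := upper_break)) //.
- by apply: eq_integral => k _; rewrite derive1_upper_break.
- move=> x y; rewrite !in_itv /= => /andP[? _] /andP[? _] ?.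
  by rewrite /upper_break; nra.
- by rewrite derive1_upper_break => x _; exact: cvg_id.
- rewrite derive1_upper_break; apply/cvg_ex; exists a.
  exact/cvg_at_right_filter/cvg_id.
- rewrite derive1_upper_break; apply/cvg_ex; exists b.
  exact/cvg_at_left_filter/cvg_id.
- have cF := derivable_continuous derivable_upper_break.
  split; first by move=> *; exact: derivable_upper_break.
  + exact: cvg_at_right_filter (cF a).
  + exact: cvg_at_left_filter (cF b).
Qed.

Lemma measurable_fun_itv_continuous {f : R -> R} {l h : R} :
  {in `[l, h], continuous f} -> measurable_fun `]l, h[ (EFin \o f).
Proof.
move=> cf; apply/measurable_EFinP; apply: open_continuous_measurable_fun.
  exact: interval_open.
move=> x; rewrite inE /= in_itv /= => /andP[? ?].
by apply: cf; rewrite in_itv /= !ltW.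
Qed.

Lemma section_meas_lower (A a b : R) : 0 <= b <= 1 ->
  {in `]lower_break b, lower_break a[%classic, section_meas A =1 section_len A}.
Proof.
move=> /andP[? ?] x; rewrite inE /= in_itv /= /lower_break => /andP[? ?].
by rewrite section_meas_lt_half //; nra.
Qed.

Lemma section_meas_upper (A a b : R) : 0 <= b <= 1 ->
  {in `]upper_break a, upper_break b[%classic,
   section_meas A =1 (fun x => section_len A (1 - x))}.
Proof.
move=> /andP[? ?] x; rewrite inE /= in_itv /= /upper_break => /andP[? ?].
by rewrite section_meas_gt_half //; nra.
Qed.

Lemma continuous_onem : continuous (fun x : R => 1 - x).
Proof. by move=> x; apply: continuousB; [exact: cvg_cst | exact: cvg_id]. Qed.

Lemma continuous_section_len_onem {A a b : R} :
  {in `[lower_break b, lower_break a], continuous (section_len A)} ->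
  {in `[upper_break a, upper_break b],
   continuous (fun x : R => section_len A (1 - x))}.
Proof.
move=> cG x; rewrite !in_itv /= !upper_breakE => /andP[? ?].
apply: continuous_comp; first exact: continuous_onem.
by apply: cG; rewrite in_itv /=; apply/andP; split; lra.
Qed.

Lemma integral_section_meas_lower (A a b : R) : 0 <= a -> a <= b -> b <= 1 ->
  {in `[lower_break b, lower_break a], continuous (section_len A)} ->
  (\int[mu]_(x in `]lower_break b, lower_break a[) (section_meas A x)%:E =
   \int[mu]_(k in `[a, b]) (section_len A (lower_break k) * k)%:E)%E.
Proof.
move=> a_ge0 ab b_le1 cG; have b01 : 0 <= b <= 1 by apply/andP; split; lra.
under eq_integral => x /(@section_meas_lower A a b b01) -> do [].
rewrite -(integral_itv_bndoo true false (measurable_fun_itv_continuous cG)).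
apply: integral_lower_break => //.
by apply: continuous_in_subspaceT => x; rewrite inE => /cG.
Qed.

Lemma integral_section_meas_upper (A a b : R) : 0 <= a -> a <= b -> b <= 1 ->
  {in `[lower_break b, lower_break a], continuous (section_len A)} ->
  (\int[mu]_(x in `]upper_break a, upper_break b[) (section_meas A x)%:E =
   \int[mu]_(k in `[a, b]) (section_len A (lower_break k) * k)%:E)%E.
Proof.
move=> a_ge0 ab b_le1 cG; have b01 : 0 <= b <= 1 by apply/andP; split; lra.
have cGonem := continuous_section_len_onem cG.
under eq_integral => x /(@section_meas_upper A a b b01) -> do [].
rewrite -(integral_itv_bndoo true false (measurable_fun_itv_continuous cGonem)).
rewrite integral_upper_break //; last first.
  by apply: continuous_in_subspaceT => x; rewrite inE => /cGonem.
by apply: eq_integral => k _; rewrite upper_breakE opprB addrC subrK.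
Qed.

Lemma section_meas_out {A a b x : R} :
  {in `[0, 1/2[, forall x, x \notin `]lower_break b, lower_break a[ ->
                   section_len A x = 0} ->
  x \notin `]lower_break b, lower_break a[ ->
  x \notin `]upper_break a, upper_break b[ -> section_meas A x = 0.
Proof.
move=> G0 x_lo x_up; rewrite /section_meas.
case: ifPn => [/andP[? ?]|_].
  by apply: G0; rewrite // in_itv /=; apply/andP.
case: ifPn => [/andP[? ?]|_] //.
apply: G0; first by rewrite in_itv /=; apply/andP; split; lra.
apply: contra x_up; rewrite !in_itv /= !upper_breakE => /andP[? ?].
by apply/andP; split; lra.
Qed.

Lemma integral_section_meas_split {A a b : R} : 0 <= a -> a <= b -> b <= 1 ->
  {in `[0, 1/2[, forall x, x \notin `]lower_break b, lower_break a[ ->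
                   section_len A x = 0} ->
  {in `[lower_break b, lower_break a], continuous (section_len A)} ->
  (\int[mu]_x (section_meas A x)%:E =
   \int[mu]_(x in `]lower_break b, lower_break a[) (section_meas A x)%:E +
   \int[mu]_(x in `]upper_break a, upper_break b[) (section_meas A x)%:E)%E.
Proof.
move=> a_ge0 ab b_le1 G0 cG; have b01 : 0 <= b <= 1 by apply/andP; split; lra.
rewrite -ge0_integral_setU //.
- rewrite [RHS]integral_mkcond; apply: eq_integral => x _; rewrite /patch.
  case: ifPn => // /negP; rewrite in_setE => /not_orP[/negP x_lo /negP x_up].
  by rewrite (section_meas_out G0).
- apply/measurable_funU => //; split.
    apply: eq_measurable_fun (measurable_fun_itv_continuous cG) => x.
    by move/(@section_meas_lower A a b b01) => /= ->.
  apply: eq_measurable_fun (measurable_fun_itv_continuous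
                              (continuous_section_len_onem cG)) => x.
  by move/(@section_meas_upper A a b b01) => /= ->.
- by move=> x _; rewrite lee_fin section_meas_ge0.
- apply/disj_setPS => x [] /=; rewrite !in_itv /= upper_breakE /lower_break.
  by move=> /andP[? ?] /andP[? ?]; nra.
Qed.

Lemma uniform2_triangle_area_gt_param {A a b : R} :
  0 <= A -> 0 <= a -> a <= b -> b <= 1 ->
  {in `[0, 1/2[, forall x, x \notin `]lower_break b, lower_break a[ ->
                   section_len A x = 0} ->
  {in `[lower_break b, lower_break a], continuous (section_len A)} ->
  uniform2 (triangle_area_gt A) =
  ((\int[mu]_(k in `[a, b]) (section_len A (lower_break k) * k)%:E) *+ 2)%E.
Proof.
move=> A_ge0 a_ge0 ab b_le1 G0 cG.
rewrite uniform2_triangle_area_gt //.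
rewrite (integral_section_meas_split a_ge0 ab b_le1 G0 cG).
by rewrite integral_section_meas_lower // integral_section_meas_upper // mule2n.
Qed.

Lemma section_len0 (x : R) : section_len 0 x = `|x|.
Proof. by rewrite /section_len mulr0 expr0n /= mul0r subr0 sqrtr_sqr. Qed.

Lemma continuous_section_len0 : continuous (section_len 0).
Proof.
have -> : section_len 0 = Num.norm :> (R -> R).
  by apply/funext => x; rewrite section_len0.
exact: norm_continuous.
Qed.

Lemma continuous_section_len (A x : R) : x < 1/2 ->
  {for x, continuous (section_len A)}.
Proof.
move=> x_lt; apply: (continuous_comp
  (f := fun x : R => x ^+ 2 - (4 * A) ^+ 2 / (1 - 2 * x)) (g := Num.sqrt));
  last exact: sqrt_continuous.
apply: continuousB; first exact: exprn_continuous.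
apply: continuousM; first exact: cvg_cst.
apply: continuousV; first by rewrite subr_eq0; apply/eqP; lra.
exact: (derivable_continuous (f := fun x : R => 1 - 2 * x)).
Qed.

Lemma triangle_area_gt0 :
  @unit_square R `&` @triangle_event R = triangle_area_gt 0.
Proof.
apply/seteqP; split=> -[x y]; last by move=> [].
move=> [sq tri]; split=> //; rewrite /area_gt_event /=.
move: tri => /(is_triangle_sum1 (pieces_sum x y)) [? ? ?].
rewrite heron_area_perimeter1 ?pieces_sum // sqrtr_gt0.
by apply: divr_gt0 => //; apply: mulr_gt0; first apply: mulr_gt0; lra.
Qed.

Lemma integral_lower_break_mulr :
  (\int[mu]_(k in `[0%R, 1%R]) (lower_break k * k)%:E = (1/8)%:E)%E.
Proof.
pose F (k : R) := k ^+ 2 / 4 - k ^+ 4 / 8.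
have dF k : derivable F k 1.
  by apply: derivableB; apply: derivableM => //; exact: exprn_derivable.
rewrite (@continuous_FTC2 _ _ F) //.
- by rewrite -EFinB; congr EFin; rewrite /F; field.
- apply: continuous_subspaceT => k.
  exact: (derivable_continuous (f := fun k : R => lower_break k * k)).
- have cF := derivable_continuous dF.
  split; first by move=> *; exact: dF.
  + exact: cvg_at_right_filter (cF 0).
  + exact: cvg_at_left_filter (cF 1).
- move=> k _; rewrite derive1E /F deriveB //= deriveMr //= deriveMr //=.
  by rewrite !exp_derive /= /GRing.scale /= /lower_break; field.
Qed.

Lemma uniform2_triangle :
  uniform2 (@unit_square R `&` @triangle_event R) = (1/4)%:E.
Proof.
rewrite triangle_area_gt0 (@uniform2_triangle_area_gt_param 0 0 1) //;
  first last.
- by move=> x _; exact: continuous_section_len0.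
- move=> x; rewrite !in_itv /= /lower_break => /andP[x_ge0 x_lt].
  rewrite negb_and -!leNgt expr0n expr1n /= subrr subr0 mul0r => /orP[? | ?].
    by rewrite section_len0 (_ : x = 0) ?normr0 //; lra.
  lra.
transitivity ((\int[mu]_(k in `[0%R, 1%R]) (lower_break k * k)%:E) *+ 2)%E.
  congr (_ *+ 2)%E; apply: eq_integral => k.
  rewrite inE /= in_itv /= => /andP[? ?].
  by rewrite section_len0 ger0_norm // /lower_break; nra.
by rewrite integral_lower_break_mulr mule2n -EFinD; congr EFin; lra.
Qed.

Lemma cubic_two_roots {c m1 m2 : R} : m1 != m2 ->
  m1 * (1 - m1 ^+ 2) = c -> m2 * (1 - m2 ^+ 2) = c ->
  1 = m1 ^+ 2 + m1 * m2 + m2 ^+ 2 /\ c = m1 * m2 * (m1 + m2).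
Proof.
move=> m12 h1 h2.
have sum_sq : 1 = m1 ^+ 2 + m1 * m2 + m2 ^+ 2.
  have : (m1 - m2) * (1 - (m1 ^+ 2 + m1 * m2 + m2 ^+ 2)) =
         m1 * (1 - m1 ^+ 2) - m2 * (1 - m2 ^+ 2) by ring.
  rewrite h1 h2 subrr => /eqP; rewrite mulf_eq0 subr_eq0 (negbTE m12) /=.
  by rewrite subr_eq0 => /eqP.
by split=> //; rewrite -h1 {1}sum_sq; ring.
Qed.

(* For [o = 1] and [8 A = m1 m2 (m1 + m2)] the left side is the radicand
   [(1 - 2 x) x^2 - (4 A)^2] of [section_len]: its roots are [lower_break m1],
   [lower_break m2] and a negative number. [o] stays abstract so that [field]
   needs no hypothesis. *)
Lemma radicand_factor {o m1 m2 : R} (x : R) : o = m1 ^+ 2 + m1 * m2 + m2 ^+ 2 ->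
  (o - 2 * x) * x ^+ 2 - (m1 * m2 * (m1 + m2)) ^+ 2 / 4 =
  -2 * (x - (o - m1 ^+ 2) / 2) * (x - (o - m2 ^+ 2) / 2) * (x + m1 * m2 / 2).
Proof. by move=> ->; field. Qed.

Lemma section_len_eq0_out (A m1 m2 : R) : 0 < m1 -> m1 < m2 ->
  1 = m1 ^+ 2 + m1 * m2 + m2 ^+ 2 -> 8 * A = m1 * m2 * (m1 + m2) ->
  {in `[0, 1/2[, forall x, x \notin `]lower_break m2, lower_break m1[ ->
                   section_len A x = 0}.
Proof.
move=> m1_gt0 m12 sum_sq prod x; rewrite !in_itv /= => /andP[x_ge0 x_lt] x_out.
have u_gt0 : 0 < 1 - 2 * x by lra.
rewrite /section_len ler0_sqrtr //.
have -> : x ^+ 2 - (4 * A) ^+ 2 / (1 - 2 * x) =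
   ((1 - 2 * x) * x ^+ 2 - (m1 * m2 * (m1 + m2)) ^+ 2 / 4) / (1 - 2 * x).
  by rewrite -prod; field; lra.
rewrite pmulr_lle0 ?invr_gt0 // (radicand_factor x sum_sq).
have l21 : lower_break m2 < lower_break m1 by rewrite /lower_break; nra.
have : 0 <= (x - lower_break m1) * (x - lower_break m2).
  by move: x_out; rewrite negb_and -!leNgt => /orP[] ?; nra.
have : 0 < x + m1 * m2 / 2 by nra.
rewrite -/(lower_break m1) -/(lower_break m2); nra.
Qed.

Lemma section_len_lower_break (A k : R) : 0 < k ->
  section_len A (lower_break k) * k =
  2^-1 * Num.sqrt (k ^+ 2 * (1 - k ^+ 2) ^+ 2 - (8 * A) ^+ 2).
Proof.
move=> k_gt0; rewrite /section_len.
have -> : 1 - 2 * lower_break k = k ^+ 2.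
  by rewrite /lower_break; field.
rewrite -[X in _ * X](ger0_norm (ltW k_gt0)) -sqrtr_sqr mulrC.
rewrite -sqrtrM ?sqr_ge0 //.
have -> : k ^+ 2 * (lower_break k ^+ 2 - (4 * A) ^+ 2 / k ^+ 2) =
          2^-1 ^+ 2 * (k ^+ 2 * (1 - k ^+ 2) ^+ 2 - (8 * A) ^+ 2).
  by rewrite /lower_break; field; rewrite gt_eqF.
by rewrite sqrtrM ?sqr_ge0 // sqrtr_sqr ger0_norm // invr_ge0.
Qed.

Lemma integrable_sqrt_radicand (c a b : R) :
  mu.-integrable `[a, b]
    (EFin \o (fun k => Num.sqrt (k ^+ 2 * (1 - k ^+ 2) ^+ 2 - c))).
Proof.
apply: continuous_compact_integrable; first exact: segment_compact.
apply: continuous_subspaceT => k.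
apply: (continuous_comp (f := fun k : R => k ^+ 2 * (1 - k ^+ 2) ^+ 2 - c));
  last exact: sqrt_continuous.
apply: (derivable_continuous
  (f := fun k : R => k ^+ 2 * (1 - k ^+ 2) ^+ 2 - c)) => z.
by apply: derivableB => //; apply: derivableM; exact: exprn_derivable.
Qed.

Lemma integral_sqrt_radicand_fin_num (c a b : R) :
  (\int[mu]_(k in `[a, b]) (Num.sqrt (k ^+ 2 * (1 - k ^+ 2) ^+ 2 - c))%:E)%E
    \is a fin_num.
Proof. exact: integrable_fin_num (integrable_sqrt_radicand c a b). Qed.

Lemma uniform2_triangle_area_gt_roots {A m1 m2 : R} :
  0 < m1 -> m1 < m2 -> m2 < 1 ->
  m1 * (1 - m1 ^+ 2) = 8 * A -> m2 * (1 - m2 ^+ 2) = 8 * A ->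
  uniform2 (triangle_area_gt A) =
  (\int[mu]_(k in `[m1, m2])
     (Num.sqrt (k ^+ 2 * (1 - k ^+ 2) ^+ 2 - (8 * A) ^+ 2))%:E)%E.
Proof.
move=> m1_gt0 m12 m2_lt1 h1 h2.
have [sum_sq prod] := cubic_two_roots (negbT (lt_eqF m12)) h1 h2.
have A_ge0 : 0 <= A by nra.
have l1_lt : lower_break m1 < 1/2 by rewrite /lower_break; nra.
rewrite (uniform2_triangle_area_gt_param A_ge0 (ltW m1_gt0) (ltW m12)
           (ltW m2_lt1)); first last.
- move=> x; rewrite in_itv /= => /andP[_ ?]; apply: continuous_section_len; lra.
- exact: section_len_eq0_out.
have I_int := integrable_sqrt_radicand ((8 * A) ^+ 2) m1 m2.
transitivity (((2^-1)%:E * \int[mu]_(k in `[m1, m2])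
   (Num.sqrt (k ^+ 2 * (1 - k ^+ 2) ^+ 2 - (8 * A) ^+ 2))%:E) *+ 2)%E.
  congr (_ *+ 2)%E; rewrite -ge0_integralZl_EFin //.
  - apply: eq_integral => k; rewrite inE /= in_itv /= => /andP[? _].
    by rewrite section_len_lower_break //; lra.
  - exact: measurable_int I_int.
rewrite -(fineK (integral_sqrt_radicand_fin_num _ _ _)) mule2n -EFinM -EFinD.
by congr EFin; field.
Qed.

End TriangleArea.

Theorem mainTheorem2 (R : realType) (A0 mu1 mu2 : R) :
  0 < A0 -> A0 < Num.sqrt 3 / 36 ->
  0 < mu1 -> mu1 < mu2 -> mu2 < 1 ->
  mu1 * (1 - mu1 ^+ 2) - 8 * A0 = 0 ->
  mu2 * (1 - mu2 ^+ 2) - 8 * A0 = 0 ->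
  (forall k : R, 0 < k -> k < 1 -> k * (1 - k ^+ 2) - 8 * A0 = 0 ->
     k = mu1 \/ k = mu2) ->
  ((cond_prob (area_gt_event A0) (@triangle_event R))%:E =
   4%:E * \int[lebesgue_measure]_(k in `[mu1, mu2])
            (Num.sqrt (k ^+ 2 * (1 - k ^+ 2) ^+ 2 - (8 * A0) ^+ 2))%:E)%E.
Proof.
(* The first two hypotheses and the uniqueness of the roots follow from
   [0 < mu1 < mu2 < 1] (the third root of the cubic is [- mu1 - mu2 < 0]). *)
move=> _ _ mu1_gt0 mu12 mu2_lt1 /subr0_eq h1 /subr0_eq h2 _.
rewrite /cond_prob -/(triangle_area_gt A0).
rewrite (uniform2_triangle_area_gt_roots mu1_gt0 mu12 mu2_lt1 h1 h2).
rewrite uniform2_triangle.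
rewrite -(fineK (integral_sqrt_radicand_fin_num _ _ _)) /=.
by rewrite -EFinM; congr EFin; field.
Qed.
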